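(* Let $d\geq 3$ and let $P$ be the standard pattern of $Q_d$. Then any ordering of the vertices of $P$ as a sequence $(v_1,\ldots,v_m)$ is an $L$-sequence, i.e., for each $i$ there is $u_i\in N[v_i]$ with $u_i\notin N(v_j)$ for all $j<i$.
   Context: $Q_d$ is the $d$-dimensional hypercube: vertices are the $0$-$1$ strings of length $d$, two strings adjacent iff they differ in exactly one position. $N(v)$ is the open neighborhood, $N[v]=N(v)\cup\{v\}$. Partition $Q_d$ into $2^{d-3}$ subcubes, each consisting of the 8 strings sharing a fixed prefix $*\in\{0,1\}^{d-3}$ in the first $d-3$ positions. Pattern A of a subcube with prefix $*$ is $\{*000,*011,*101,*110\}$ and Pattern B is $\{*001,*010,*100,*111\}$. The cube distance between two subcubes is the Hamming distance between their prefixes. Let $Q_1$ denote the subcube with prefix $0^{d-3}$. The standard pattern is the set consisting of the Pattern A vertices of all subcubes at even cube distance from $Q_1$ together with the Pattern B vertices of all subcubes at odd cube distance from $Q_1$. *)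

From mathcomp Require Import all_boot.
Set Implicit Arguments. Unset Strict Implicit. Unset Printing Implicit Defensive.

Definition vertex (d : nat) := {ffun 'I_d -> bool}.

Definition adj d (u v : vertex d) : bool := #|[set i : 'I_d | u i != v i]| == 1.

Definition open_nbhd d (v : vertex d) : {set vertex d} := [set u | adj v u].
Definition closed_nbhd d (v : vertex d) : {set vertex d} := v |: open_nbhd v.

Definition bitn d (v : vertex d) (k : nat) : bool :=
  [exists i : 'I_d, (val i == k) && v i].

(* the last three bits of v (positions d-2, d-1, d in 1-based numbering) *)
Definition last3 d (v : vertex d) : bool * bool * bool :=
  (bitn v (d - 3), bitn v (d - 2), bitn v (d - 1)).

(* v lies in Pattern A (resp. B) of its own subcube *)
Definition in_patternA d (v : vertex d) : bool :=
  last3 v \in [:: (false, false, false); (false, true, true);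
                 (true, false, true); (true, true, false)].
Definition in_patternB d (v : vertex d) : bool :=
  last3 v \in [:: (false, false, true); (false, true, false);
                 (true, false, false); (true, true, true)].

(* cube distance between the subcubes containing u and v:
   Hamming distance of the prefixes (first d-3 positions) *)
Definition cube_dist d (u v : vertex d) : nat :=
  #|[set i : 'I_d | (val i < d - 3) && (u i != v i)]|.

(* cube distance from the subcube of v to Q_1 (prefix 0^{d-3}) *)
Definition dist_to_Q1 d (v : vertex d) : nat :=
  #|[set i : 'I_d | (val i < d - 3) && v i]|.

Definition standard_pattern d : {set vertex d} :=
  [set v | if ~~ odd (dist_to_Q1 v) then in_patternA v else in_patternB v].

Definition L_sequence d (s : seq (vertex d)) : Prop :=
  forall (s1 s2 : seq (vertex d)) (v : vertex d), s = s1 ++ v :: s2 ->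
    exists u, u \in closed_nbhd v /\ (forall w, w \in s1 -> u \notin open_nbhd w).

From mathcomp Require Import all_boot.
Set Implicit Arguments. Unset Strict Implicit. Unset Printing Implicit Defensive.

(* The three bits of Pattern A have even sum and those of Pattern B odd sum,
   and the pattern flips with the parity of the cube distance to Q_1; hence
   the standard pattern is exactly the set of vertices of even Hamming
   weight.  Adjacent vertices have weights of different parity, so the
   standard pattern is independent, and then u_i := v_i works for every
   ordering. *)

Definition weight d (v : vertex d) : nat := \sum_(i < d) v i.

Lemma card_set_sum (T : finType) (P : pred T) : #|[set x | P x]| = \sum_(x : T) P x.
Proof.
rewrite -sum1_card big_mkcond; apply: eq_bigr => x _.
by rewrite inE; case: (P x).
Qed.

Lemma odd_weight_adj d (u v : vertex d) : adj u v -> odd (weight v) = ~~ odd (weight u).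
Proof.
rewrite /adj => /cards1P[j diff_j].
have diffE i : (u i != v i) = (i == j).
  by move/setP/(_ i): diff_j; rewrite !inE.
have eq_off_j : \sum_(i < d | i != j) v i = \sum_(i < d | i != j) u i.
  by apply: eq_bigr => i /negbTE ij; move: (diffE i); rewrite ij => /negbFE/eqP ->.
have := diffE j; rewrite eqxx => uv_j.
rewrite /weight (bigD1 j) // [X in ~~ odd X](bigD1 j) //= eq_off_j !oddD.
by move: uv_j (odd (\sum_(i < d | i != j) u i)); case: (u j); case: (v j) => // _ [].
Qed.

Lemma bitn_ord d (v : vertex d) (i : 'I_d) : bitn v i = v i.
Proof.
apply/existsP/idP => [[j /andP[/eqP/val_inj -> //]] | vi].
by exists i; rewrite eqxx.
Qed.

Definition last3_sum d (v : vertex d) : nat :=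
  bitn v (d - 3) + bitn v (d - 2) + bitn v (d - 1).

Lemma in_patternAE d (v : vertex d) : in_patternA v = ~~ odd (last3_sum v).
Proof. by rewrite /in_patternA /last3_sum /last3; do 3!case: bitn. Qed.

Lemma in_patternBE d (v : vertex d) : in_patternB v = odd (last3_sum v).
Proof. by rewrite /in_patternB /last3_sum /last3; do 3!case: bitn. Qed.

Lemma standard_patternE d (v : vertex d) :
  (v \in standard_pattern d) = ~~ odd (dist_to_Q1 v + last3_sum v).
Proof.
rewrite inE in_patternAE in_patternBE oddD.
by case: (odd (dist_to_Q1 v)); case: (odd (last3_sum v)).
Qed.

Lemma weight_split n (v : vertex n.+3) : weight v = dist_to_Q1 v + last3_sum v.
Proof.
rewrite /dist_to_Q1 /last3_sum card_set_sum !subSS !subn0 /weight !big_ord_recr /=.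
rewrite -(bitn_ord v (ord_max : 'I_n.+3)) -(bitn_ord v (widen_ord _ ord_max)).
rewrite -(bitn_ord v (widen_ord _ (widen_ord _ ord_max))) /= ltnn.
rewrite [n.+1 < n]ltnNge leqW // [n.+2 < n]ltnNge !leqW // !addn0 !addnA.
by congr (_ + _ + _ + _); apply: eq_bigr => i _; rewrite /= ltn_ord.
Qed.

Lemma standard_pattern_even n (v : vertex n.+3) :
  (v \in standard_pattern n.+3) = ~~ odd (weight v).
Proof. by rewrite standard_patternE weight_split. Qed.

Lemma standard_pattern_independent n (u v : vertex n.+3) :
  u \in standard_pattern n.+3 -> v \in standard_pattern n.+3 -> ~~ adj u v.
Proof.
rewrite !standard_pattern_even => u_even v_even; apply/negP => /odd_weight_adj.
by rewrite u_even (negbTE v_even).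
Qed.

Lemma L_sequence_independent d (s : seq (vertex d)) :
  {in s &, forall u v, ~~ adj u v} -> L_sequence s.
Proof.
move=> indep s1 s2 v s_def; exists v; split; first exact: setU11.
have s_v : v \in s by rewrite s_def mem_cat mem_head orbT.
move=> w w_s1; rewrite inE; apply: indep s_v.
by rewrite s_def mem_cat w_s1.
Qed.

Theorem mainTheorem8 (d : nat) (hd : 3 <= d) (s : seq (vertex d)) :
  perm_eq s (enum (standard_pattern d)) -> L_sequence s.
Proof.
case: d hd s => [|[|[|n]]] // _ s s_perm.
apply: L_sequence_independent => u v.
rewrite !(perm_mem s_perm) !mem_enum.
exact: standard_pattern_independent.
Qed.
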